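(* Let $(\mathcal G,\mathcal F)$ be a $B_n$-generalized almost pseudo-Hermitian structure on an odd exact Courant algebroid $E$ over a manifold $M$ of dimension $n$, let $U:=\ker\mathcal F$ and let $u_0\in\Gamma(U)$ satisfy $\langle u_0,u_0\rangle=(-1)^n$. Then: (i) $\mathcal G^{\mathrm{end}}(u_0)=(-1)^nu_0$; i.e. $u_0$ is a section of $E_+$ if $n$ is even and of $E_-$ if $n$ is odd; (ii) for all $u,v\in E$, $\mathcal G(\mathcal Fu,\mathcal Fv)=\mathcal G(u,v)-\langle u,u_0\rangle\langle v,u_0\rangle$ and $\mathcal G(\mathcal Fu,v)=-\mathcal G(u,\mathcal Fv)$, where $\mathcal G(u,v):=\langle\mathcal G^{\mathrm{end}}u,v\rangle$.
   Context: An odd exact Courant algebroid over an $n$-manifold $M$ is a Courant algebroid (vector bundle $E$ with nondegenerate symmetric scalar product $\langle\cdot,\cdot\rangle$, Dorfman bracket and anchor $\pi:E\to TM$) isomorphic to $TM\oplus T^*M\oplus\mathbb R$ with scalar product $\langle X+\xi+\lambda,Y+\eta+\mu\rangle=\tfrac12(\eta(X)+\xi(Y))+\lambda\mu$, anchor the projection and Dorfman bracket $[X+\xi+\lambda,Y+\eta+\mu]=\mathcal L_XY+\mathcal L_X\eta-i_Yd\xi+2\mu\,d\lambda+i_Xi_YH-2(\mu\,i_XF-\lambda\,i_YF)+X(\mu)-Y(\lambda)+F(X,Y)$ for some closed $2$-form $F$ and $3$-form $H$ with $dH=-F\wedge F$. A generalized metric is a rank $n$ subbundle $E_-\subset E$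 on which $\langle\cdot,\cdot\rangle$ is nondegenerate and with $\pi|_{E_-}$ an isomorphism onto $TM$; $E_+:=E_-^\perp$, $\mathcal G^{\mathrm{end}}=\pm\mathrm{Id}$ on $E_\pm$. A $B_n$-generalized almost complex structure is an endomorphism $\mathcal F$ whose $i$-eigenbundle $L\subset E\otimes\mathbb C$ is isotropic of rank $n$ with $L\cap\bar L=0$, whose $-i$-eigenbundle is $\bar L$ and which vanishes on the rank-one bundle $(L\oplus\bar L)^\perp$. A $B_n$-generalized almost pseudo-Hermitian structure is such a pair $(\mathcal G,\mathcal F)$ with $\mathcal G^{\mathrm{end}}\mathcal F=\mathcal F\mathcal G^{\mathrm{end}}$. *)

(* pointwise (fibrewise) linear algebra over a real closed field R *)
From HB Require Import structures.
From mathcomp Require Import all_boot all_order all_algebra.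
From mathcomp Require Import complex.
Set Implicit Arguments. Unset Strict Implicit. Unset Printing Implicit Defensive.
Import Order.TTheory GRing.Theory Num.Theory.
Local Open Scope ring_scope.

(* Fibre of the odd exact Courant algebroid: E_x = T_xM (+) T_x^*M (+) R,
   modelled as row vectors of length n + n + 1:
   indices 0..n-1 : X (tangent part), n..2n-1 : xi (cotangent part, dual basis),
   index 2n : lambda. Endomorphisms act on the right: v |-> v *m A. *)

Definition odd_dim (n : nat) := (n + n).+1.

(* Gram matrix of <X+xi+l, Y+eta+m> = 1/2 (eta(X) + xi(Y)) + l m *)
Definition courant_gram (R : fieldType) (n : nat) : 'M[R]_(odd_dim n) :=
  \matrix_(i, j)
    (if ((i < n)%N && (val j == i + n)%N) || ((j < n)%N && (val i == j + n)%N)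
     then 2%:R^-1
     else if (val i == n + n)%N && (val j == n + n)%N then 1 else 0).

Definition cprod (R : fieldType) (n : nat) (u v : 'rV[R]_(odd_dim n)) : R :=
  (u *m courant_gram R n *m v^T) 0 0.

Definition anchor (R : fieldType) (n : nat) (v : 'rV[R]_(odd_dim n)) : 'rV[R]_n :=
  \row_(k < n) v 0 (inord k).

(* E_+ = E_-^perp, E_- being the row space of Em *)
Definition in_Eplus (R : fieldType) (n : nat) (Em : 'M[R]_(odd_dim n))
  (v : 'rV[R]_(odd_dim n)) : Prop :=
  forall w : 'rV[R]_(odd_dim n), (w <= Em)%MS -> cprod v w = 0.

Definition generalized_metric (R : fieldType) (n : nat)
  (Em : 'M[R]_(odd_dim n)) (Gend : 'M[R]_(odd_dim n)) : Prop :=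
  [/\ \rank Em = n,
      (forall v : 'rV[R]_(odd_dim n), (v <= Em)%MS -> (forall w : 'rV[R]_(odd_dim n), (w <= Em)%MS -> cprod v w = 0) -> v = 0),
      ((forall v : 'rV[R]_(odd_dim n), (v <= Em)%MS -> anchor v = 0 -> v = 0) /\
       (forall X : 'rV[R]_n, exists v, (v <= Em)%MS /\ anchor v = X)),
      (forall v : 'rV[R]_(odd_dim n), (v <= Em)%MS -> v *m Gend = - v) &
      (forall v, in_Eplus Em v -> v *m Gend = v)].

Definition cplx (R : rcfType) (x : R) : R[i] := Complex x 0.
Definition cprodC (R : rcfType) (n : nat) (u v : 'rV[R[i]]_(odd_dim n)) : R[i] :=
  (u *m map_mx (@cplx R) (courant_gram R n) *m v^T) 0 0.

Definition eigL (R : rcfType) (n : nat) (Fm : 'M[R]_(odd_dim n)) :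
  'M[R[i]]_(odd_dim n) := eigenspace (map_mx (@cplx R) Fm) (Complex 0 1).
Definition conjL (R : rcfType) (n : nat) (L : 'M[R[i]]_(odd_dim n)) :
  'M[R[i]]_(odd_dim n) := map_mx (@conjc R) L.

Definition Bn_gen_almost_complex (R : rcfType) (n : nat) (Fm : 'M[R]_(odd_dim n)) :
  Prop :=
  let L := eigL Fm in
  let Lb := conjL L in
  [/\ (forall v w : 'rV[R[i]]_(odd_dim n), (v <= L)%MS -> (w <= L)%MS -> cprodC v w = 0),
      \rank L = n,
      (L :&: Lb = 0)%MS,
      (eigenspace (map_mx (@cplx R) Fm) (Complex 0 (-1)) == Lb)%MS &
      (forall v : 'rV[R]_(odd_dim n),
         (forall w : 'rV[R[i]]_(odd_dim n), (w <= L + Lb)%MS -> cprodC (map_mx (@cplx R) v) w = 0) ->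
         v *m Fm = 0)].

Definition Bn_gen_almost_pseudo_hermitian (R : rcfType) (n : nat)
  (Em Gend Fm : 'M[R]_(odd_dim n)) : Prop :=
  [/\ generalized_metric Em Gend, Bn_gen_almost_complex Fm & Gend *m Fm = Fm *m Gend].

Definition Gform (R : fieldType) (n : nat) (Gend : 'M[R]_(odd_dim n))
  (u v : 'rV[R]_(odd_dim n)) : R := cprod (u *m Gend) v.

From HB Require Import structures.
From mathcomp Require Import all_boot all_order all_algebra.
From mathcomp Require Import complex.
From mathcomp Require Import ring lra zify.
Import Order.TTheory GRing.Theory Num.Theory.
Local Open Scope ring_scope.
Set Implicit Arguments. Unset Strict Implicit. Unset Printing Implicit Defensive.

(* After complexification, E = L (+) Lbar (+) C u0: the kernel of F is a line,
   and a real vector orthogonal to L (+) Lbar lies in it, so u0 is orthogonal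
   to L (+) Lbar.  On this decomposition F acts by (i, -i, 0), which makes F
   skew and gives F^2 u = - u + <u,u0>/<u0,u0> u0.  Since G commutes with F it
   preserves ker F, so G u0 = +- u0.  If u0 lies in E_+ then E_- is
   F-stable, orthogonal to u0, hence carries the complex structure F and has
   even rank n; if u0 lies in E_- the same argument on E_+ makes n + 1 even. *)

Section BilinearForm.
Variables (K : fieldType) (N : nat) (M : 'M[K]_N).

Definition bform (u v : 'rV[K]_N) : K := (u *m M *m v^T) 0 0.

Lemma bformDl u1 u2 v : bform (u1 + u2) v = bform u1 v + bform u2 v.
Proof. by rewrite /bform !mulmxDl mxE. Qed.

Lemma bformDr u v1 v2 : bform u (v1 + v2) = bform u v1 + bform u v2.
Proof. by rewrite /bform linearD /= mulmxDr mxE. Qed.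

Lemma bformZl a u v : bform (a *: u) v = a * bform u v.
Proof. by rewrite /bform -!scalemxAl mxE. Qed.

Lemma bformZr a u v : bform u (a *: v) = a * bform u v.
Proof. by rewrite /bform linearZ /= -scalemxAr mxE. Qed.

Lemma bformNl u v : bform (- u) v = - bform u v.
Proof. by rewrite -scaleN1r bformZl mulN1r. Qed.

Lemma bformNr u v : bform u (- v) = - bform u v.
Proof. by rewrite -scaleN1r bformZr mulN1r. Qed.

Lemma bform0r u : bform u 0 = 0.
Proof. by rewrite /bform trmx0 mulmx0 mxE. Qed.

Lemma bform_sym : M^T = M -> forall u v, bform u v = bform v u.
Proof.
move=> sM u v; rewrite /bform.
transitivity ((u *m M *m v^T)^T 0 0); first by rewrite [RHS]mxE.
by rewrite !trmx_mul trmxK sM mulmxA.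
Qed.

Lemma bform_eq0_submx (y : 'rV[K]_N) m (X : 'M[K]_(m, N)) w :
  y *m M *m X^T = 0 -> (w <= X)%MS -> bform y w = 0.
Proof. by move=> yX /submxP[D ->]; rewrite /bform trmx_mul mulmxA yX mul0mx mxE. Qed.

End BilinearForm.

Lemma cprodE (R : fieldType) n (u v : 'rV[R]_(odd_dim n)) :
  cprod u v = bform (courant_gram R n) u v.
Proof. by []. Qed.

Lemma courant_gram_sym (R : fieldType) n : (courant_gram R n)^T = courant_gram R n.
Proof.
apply/matrixP => i j; rewrite !mxE orbC.
by congr (if _ then _ else _); rewrite andbC.
Qed.

Lemma cprod_sym (R : fieldType) n (u v : 'rV[R]_(odd_dim n)) : cprod u v = cprod v u.
Proof. exact: bform_sym (courant_gram_sym R n) u v. Qed.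

Lemma nonisotropic_neq0 (R : fieldType) n (u : 'rV[R]_(odd_dim n)) :
  cprod u u != 0 -> u != 0.
Proof. by apply: contraNneq => ->; rewrite cprodE /bform !mul0mx mxE. Qed.

Lemma rank_even_of_complex_structure (R : realFieldType) m (S F : 'M[R]_m) :
  (S *m F <= S)%MS -> (forall v : 'rV_m, (v <= S)%MS -> v *m F *m F = - v) ->
  ~~ odd (\rank S).
Proof.
move=> SF FF.
have [P PS freeP] : exists2 P : 'M_(\rank S, m), (P :=: S)%MS & row_free P.
  by exists (row_base S); [exact: eq_row_base | exact: row_base_free].
have PF : (P *m F <= P)%MS by rewrite (eqmxMr F PS) PS.
(* In the basis P of S, F has a matrix A with A^2 = -1, so det(A)^2 = (-1)^(rank S). *)
set A := P *m F *m pinvmx P.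
have AP : A *m P = P *m F := mulmxKpV PF.
have PFF : P *m F *m F = - P.
  apply/row_matrixP => i; rewrite !row_mul raddfN /=.
  by apply: FF; rewrite -PS row_sub.
have AA : A *m A = - 1%:M.
  by apply: (row_free_inj freeP); rewrite /= -mulmxA AP mulmxA AP PFF mulNmx mul1mx.
have := congr1 determinant AA.
rewrite det_mulmx -scaleN1r detZ det1 mulr1 -signr_odd.
case: (odd _) => //= detAA.
by have := sqr_ge0 (\det A); rewrite expr2 detAA; lra.
Qed.

Section GeneralizedMetric.
Variables (R : numFieldType) (n : nat) (Em Gend : 'M[R]_(odd_dim n)).
Hypothesis hG : generalized_metric Em Gend.
Local Notation N := (odd_dim n).

Definition Eplus : 'M[R]_N := kermx (courant_gram R n *m Em^T).

Lemma in_Eplus_submx (v : 'rV[R]_N) : (v <= Eplus)%MS -> in_Eplus Em v.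
Proof.
move=> /sub_kermxP vEm w wEm.
by rewrite cprodE (bform_eq0_submx _ wEm) // -mulmxA.
Qed.

Lemma capmx_Em_Eplus : (Em :&: Eplus)%MS = 0.
Proof.
case: hG => _ nondeg _ _ _.
apply/eqP/rowV0P => v; rewrite sub_capmx => /andP[vEm /in_Eplus_submx vEp].
exact: nondeg.
Qed.

Lemma rank_Eplus : \rank Eplus = n.+1.
Proof.
case: hG => rankEm _ _ _ _.
have := rank_leq_col (Em + Eplus)%MS.
rewrite mxrank_disjoint_sum ?capmx_Em_Eplus // /Eplus mxrank_ker.
have := mxrankM_maxr (courant_gram R n) Em^T.
rewrite mxrank_tr rankEm /odd_dim; lia.
Qed.

Lemma Em_Eplus_decomp (u : 'rV[R]_N) :
  exists a b, [/\ (a <= Em)%MS, (b <= Eplus)%MS & u = a + b].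
Proof.
have full : row_full (Em + Eplus)%MS.
  case: hG => rankEm _ _ _ _.
  by rewrite /row_full mxrank_disjoint_sum ?capmx_Em_Eplus // rank_Eplus rankEm addnS.
case/sub_addsmxP: (submx_full u full) => -[x y] /= ->.
by exists (x *m Em), (y *m Eplus); split; rewrite ?submxMl.
Qed.

Lemma Gend_Em (a : 'rV[R]_N) : (a <= Em)%MS -> a *m Gend = - a.
Proof. by case: hG => _ _ _ GEm _; apply: GEm. Qed.

Lemma Gend_Eplus (b : 'rV[R]_N) : (b <= Eplus)%MS -> b *m Gend = b.
Proof. by case: hG => _ _ _ _ GEp /in_Eplus_submx; apply: GEp. Qed.

Lemma Gend_sym (u v : 'rV[R]_N) : cprod (u *m Gend) v = cprod u (v *m Gend).
Proof.
have [a [b [aEm bEp ->]]] := Em_Eplus_decomp u.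
have [a' [b' [aEm' bEp' ->]]] := Em_Eplus_decomp v.
rewrite !mulmxDl Gend_Em // Gend_Eplus // Gend_Em // Gend_Eplus //.
rewrite !cprodE !(bformDl, bformDr, bformNl, bformNr) -!cprodE.
rewrite (cprod_sym a b') (in_Eplus_submx bEp aEm') (in_Eplus_submx bEp' aEm).
by rewrite oppr0 !addr0 add0r.
Qed.

Lemma Gend_invol (u : 'rV[R]_N) : u *m Gend *m Gend = u.
Proof.
have [a [b [aEm bEp ->]]] := Em_Eplus_decomp u.
by rewrite mulmxDl (Gend_Em aEm) (Gend_Eplus bEp) mulmxDl mulNmx (Gend_Em aEm) (Gend_Eplus bEp) opprK.
Qed.

Lemma double_eq0 (v : 'rV[R]_N) : v + v = 0 -> v = 0.
Proof.
rewrite -mulr2n -scaler_nat => /eqP.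
by rewrite scaler_eq0 pnatr_eq0 /= => /eqP.
Qed.

Lemma Em_of_Gend_opp (u : 'rV[R]_N) : u *m Gend = - u -> (u <= Em)%MS.
Proof.
have [a [b [aEm bEp ->]]] := Em_Eplus_decomp u.
rewrite mulmxDl Gend_Em // Gend_Eplus // opprD => /addrI bN.
have /double_eq0-> : b + b = 0 by rewrite {1}bN addNr.
by rewrite addr0.
Qed.

Lemma Eplus_of_Gend_fix (u : 'rV[R]_N) : u *m Gend = u -> (u <= Eplus)%MS.
Proof.
have [a [b [aEm bEp ->]]] := Em_Eplus_decomp u.
rewrite mulmxDl Gend_Em // Gend_Eplus // => /addIr aN.
have /double_eq0-> : a + a = 0 by rewrite -{1}aN addNr.
by rewrite add0r.
Qed.

End GeneralizedMetric.

HB.instance Definition _ (R : rcfType) :=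
  GRing.RMorphism.copy (@cplx R) (real_complex R).

Section Complexification.
Variables (R : rcfType) (n : nat).
Local Notation N := (odd_dim n).
Local Notation C := (R[i]).
Local Notation cx := (@cplx R).
Local Notation conjM := (map_mx (@conjc R)).

Lemma cprodCE (u v : 'rV[C]_N) :
  cprodC u v = bform (map_mx cx (courant_gram R n)) u v.
Proof. by []. Qed.

Lemma cprodC_map (u v : 'rV[R]_N) :
  cprodC (map_mx cx u) (map_mx cx v) = cx (cprod u v).
Proof. by rewrite /cprodC /cprod map_trmx -!map_mxM mxE. Qed.

Lemma cprodC_sym (u v : 'rV[C]_N) : cprodC u v = cprodC v u.
Proof. by rewrite !cprodCE bform_sym // map_trmx courant_gram_sym. Qed.

Lemma conj_map_real p q (A : 'M[R]_(p, q)) : conjM (map_mx cx A) = map_mx cx A.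
Proof. by apply/matrixP => i j; rewrite !mxE /cplx conjc_real. Qed.

Lemma conj_mxK p q (A : 'M[C]_(p, q)) : conjM (conjM A) = A.
Proof. by apply/matrixP => i j; rewrite !mxE conjcK. Qed.

Lemma map_Re_mx p q (X : 'M[C]_(p, q)) :
  map_mx cx (map_mx (@complex.Re R) X) = 2^-1 *: (X + conjM X).
Proof. by apply/matrixP => i j; rewrite !mxE /cplx -/(real_complex R _) ReJ_add mulrC. Qed.

Lemma map_Im_mx p q (X : 'M[C]_(p, q)) :
  map_mx cx (map_mx (@complex.Im R) X) = (2^-1 * 'i%C) *: (- X + conjM X).
Proof.
apply/matrixP => i j; rewrite !mxE /cplx -/(real_complex R _) ImJ_sub.
by rewrite addrC; ring.
Qed.

Lemma mx_ReIm p q (X : 'M[C]_(p, q)) :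
  X = map_mx cx (map_mx (@complex.Re R) X) + 'i%C *: map_mx cx (map_mx (@complex.Im R) X).
Proof. by apply/matrixP => i j; rewrite !mxE; exact: complexE. Qed.

Variables (Fm : 'M[R]_N) (u0 : 'rV[R]_N).
Hypothesis hF : Bn_gen_almost_complex Fm.
Hypothesis u0F : u0 *m Fm = 0.
Hypothesis u0_neq0 : u0 != 0.

Local Notation Fc := (map_mx cx Fm).
Local Notation L := (eigL Fm).
Local Notation Lb := (conjL (eigL Fm)).
Local Notation u0c := (map_mx cx u0).

Lemma eigL_F (l : 'rV[C]_N) : (l <= L)%MS -> l *m Fc = 'i%C *: l.
Proof. by move/eigenspaceP. Qed.

Lemma conjL_F (m : 'rV[C]_N) : (m <= Lb)%MS -> m *m Fc = - 'i%C *: m.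
Proof.
case: hF => _ _ _ /eqmxP eigLb _ mLb.
have /eigenspaceP-> : (m <= eigenspace Fc (Complex 0 (-1)))%MS by rewrite eigLb.
by congr (_ *: _); apply/eqP; rewrite eq_complex /= oppr0 !eqxx.
Qed.

Lemma u0c_F : u0c *m Fc = 0.
Proof. by rewrite -map_mxM u0F map_mx0. Qed.

Lemma eigL_isotropic (v w : 'rV[C]_N) : (v <= L)%MS -> (w <= L)%MS -> cprodC v w = 0.
Proof. by case: hF => iso _ _ _ _; apply: iso. Qed.

Lemma conjL_isotropic (v w : 'rV[C]_N) : (v <= Lb)%MS -> (w <= Lb)%MS -> cprodC v w = 0.
Proof.
have conj_sub (x : 'rV[C]_N) : (x <= Lb)%MS -> (conjM x <= L)%MS.
  by rewrite -(map_submx (@conjc R)) conj_mxK.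
move=> /conj_sub vL /conj_sub wL; move: (eigL_isotropic vL wL).
rewrite /cprodC -conj_map_real map_trmx -!map_mxM mxE => /eqP.
by rewrite conj_map_real conjc_eq0 => /eqP.
Qed.

Lemma LLb_kerF (y : 'rV[C]_N) : (y <= L + Lb)%MS -> y *m Fc = 0 -> y = 0.
Proof.
case/sub_addsmxP => -[x1 x2] /=; set l := x1 *m L; set m := x2 *m Lb => ->.
have lL : (l <= L)%MS := submxMl _ _.
have mLb : (m <= Lb)%MS := submxMl _ _.
rewrite mulmxDl (eigL_F lL) (conjL_F mLb) scaleNr -scalerBr => /eqP.
rewrite scaler_eq0 subr_eq0 complexiE (negbTE (neq0Ci _)) => /eqP lm.
have : (l <= L :&: Lb)%MS by rewrite sub_capmx lL lm mLb.
by case: hF => _ _ -> _ _; rewrite submx0 => /eqP l0; rewrite -lm l0 addr0.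
Qed.

Lemma rank_LLb : \rank (L + Lb)%MS = (n + n)%N.
Proof. by case: hF => _ rankL capLLb _ _; rewrite mxrank_disjoint_sum // mxrank_map rankL. Qed.

Lemma LLbu0_decomp (x : 'rV[C]_N) : exists l m a,
  [/\ (l <= L)%MS, (m <= Lb)%MS & x = l + m + a *: u0c].
Proof.
have cap0 : ((L + Lb) :&: u0c)%MS = 0.
  apply/eqP/rowV0P => v; rewrite sub_capmx => /andP[vLLb /sub_rVP[a va]].
  by apply: LLb_kerF; rewrite // va -scalemxAl u0c_F scaler0.
have full : row_full ((L + Lb) + u0c)%MS.
  by rewrite /row_full mxrank_disjoint_sum // rank_LLb rank_rV map_mx_eq0 u0_neq0 addn1.
case/sub_addsmxP: (submx_full x full) => -[p q] /= ->.
case/sub_addsmxP: (submxMl p (L + Lb)%MS) => -[x1 x2] /= ->.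
exists (x1 *m L), (x2 *m Lb), (q 0 0); split; rewrite ?submxMl //.
by rewrite {1}(mx11_scalar q) mul_scalar_mx.
Qed.

(* Re L and Im L span a real subspace of rank at most 2n, so its orthogonal is nonzero. *)
Lemma exists_real_orth_LLb : exists2 v : 'rV[R]_N, v != 0 &
  forall w, (w <= L + Lb)%MS -> cprodC (map_mx cx v) w = 0.
Proof.
pose ReL := map_mx (@complex.Re R) L; pose ImL := map_mx (@complex.Im R) L.
pose ReImL := col_mx ReL ImL.
have ReImL_sub : (map_mx cx ReImL <= L + Lb)%MS.
  rewrite map_col_mx col_mx_sub map_Re_mx map_Im_mx !scalemx_sub //.
  1,2: by apply: addmx_sub_adds; rewrite ?eqmx_opp.
have rank_ReImL : (\rank ReImL <= n + n)%N.
  by rewrite -rank_LLb -(mxrank_map cx) mxrankS.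
pose Kr := kermx (courant_gram R n *m ReImL^T).
have : Kr != 0.
  rewrite -mxrank_eq0 mxrank_ker subn_eq0 -ltnNge.
  by apply: leq_ltn_trans (mxrankM_maxr _ _) _; rewrite mxrank_tr ltnS.
case/rowV0Pn => v /sub_kermxP; rewrite mulmxA tr_col_mx mul_mx_row -row_mx0.
case/eq_row_mx => vReL vImL v0; exists v => // w.
have orth X : v *m courant_gram R n *m X^T = 0 ->
    map_mx cx v *m map_mx cx (courant_gram R n) *m (map_mx cx X)^T = 0.
  by move=> vX; rewrite map_trmx -!map_mxM vX map_mx0.
have orthL : map_mx cx v *m map_mx cx (courant_gram R n) *m L^T = 0.
  by rewrite {1}(mx_ReIm L) linearD linearZ /= mulmxDr -scalemxAr !orth // scaler0 addr0.
have orthLb : map_mx cx v *m map_mx cx (courant_gram R n) *m Lb^T = 0.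
  have -> : Lb = 2%:R *: map_mx cx ReL - L.
    by rewrite map_Re_mx scalerA mulfV ?pnatr_eq0 // scale1r addrC addKr.
  by rewrite linearD linearZ linearN /= mulmxDr mulmxN -scalemxAr orth // orthL scaler0 oppr0 addr0.
case/sub_addsmxP => -[x1 x2] /= ->.
by rewrite cprodCE bformDr !(bform_eq0_submx _ (submxMl _ _)) ?addr0.
Qed.

Lemma u0c_orth_LLb (w : 'rV[C]_N) : (w <= L + Lb)%MS -> cprodC u0c w = 0.
Proof.
have [v v0 v_orth] := exists_real_orth_LLb.
have vF : v *m Fm = 0 by case: hF => _ _ _ _; apply.
have [l [m [a [lL mLb ev]]]] := LLbu0_decomp (map_mx cx v).
have lm0 : l + m = 0.
  apply: LLb_kerF; first exact: addmx_sub_adds.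
  have : map_mx cx v *m Fc = 0 by rewrite -map_mxM vF map_mx0.
  by rewrite ev mulmxDl -scalemxAl u0c_F scaler0 addr0.
rewrite lm0 add0r in ev.
have a0 : a != 0.
  by apply: contraNneq v0 => a0; rewrite -(map_mx_eq0 cx) ev a0 scale0r.
move=> /v_orth; rewrite ev cprodCE bformZl -cprodCE => /eqP.
by rewrite mulf_eq0 (negbTE a0) => /eqP.
Qed.

Lemma cprodC_LLbu0 (l m l' m' : 'rV[C]_N) (a b : C) :
  (l <= L)%MS -> (m <= Lb)%MS -> (l' <= L)%MS -> (m' <= Lb)%MS ->
  cprodC (l + m + a *: u0c) (l' + m' + b *: u0c) =
  cprodC l m' + cprodC m l' + a * b * cprodC u0c u0c.
Proof.
move=> lL mLb lL' mLb'.
have orthL x : (x <= L)%MS -> cprodC u0c x = 0.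
  by move=> xL; apply: u0c_orth_LLb; rewrite (submx_trans xL) ?addsmxSl.
have orthLb x : (x <= Lb)%MS -> cprodC u0c x = 0.
  by move=> xLb; apply: u0c_orth_LLb; rewrite (submx_trans xLb) ?addsmxSr.
rewrite !cprodCE !(bformDl, bformDr, bformZl, bformZr) -!cprodCE.
rewrite (eigL_isotropic lL lL') (conjL_isotropic mLb mLb') (cprodC_sym l u0c) (cprodC_sym m u0c).
rewrite (orthL _ lL) (orthL _ lL') (orthLb _ mLb) (orthLb _ mLb').
by rewrite !mulr0 !(add0r, addr0) mulrA.
Qed.

Lemma LLbu0_F (l m : 'rV[C]_N) (a : C) : (l <= L)%MS -> (m <= Lb)%MS ->
  (l + m + a *: u0c) *m Fc = 'i%C *: l + - 'i%C *: m + 0 *: u0c.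
Proof. by move=> lL mLb; rewrite !mulmxDl -scalemxAl u0c_F eigL_F // conjL_F // scaler0 scale0r. Qed.

Lemma cprod_F_skew (u v : 'rV[R]_N) : cprod (u *m Fm) v = - cprod u (v *m Fm).
Proof.
apply: (fmorph_inj cx); rewrite rmorphN /= -!cprodC_map !map_mxM.
have [l [m [a [lL mLb ->]]]] := LLbu0_decomp (map_mx cx u).
have [l' [m' [b [lL' mLb' ->]]]] := LLbu0_decomp (map_mx cx v).
rewrite !LLbu0_F // !cprodC_LLbu0 ?scalemx_sub // !cprodCE !(bformZl, bformZr).
by ring.
Qed.

Lemma F_sqr (u : 'rV[R]_N) : cprod u0 u0 != 0 ->
  u *m Fm *m Fm = - u + (cprod u u0 / cprod u0 u0) *: u0.
Proof.
move=> c0; apply: (map_mx_inj (f := cx)).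
have ii : 'i%C * 'i%C = -1 :> C by rewrite -expr2 sqr_i.
rewrite !map_mxM map_mxD map_mxN map_mxZ fmorph_div /= -!cprodC_map.
have [l [m [a [lL mLb ->]]]] := LLbu0_decomp (map_mx cx u).
have cprodC_u0c : cprodC (l + m + a *: u0c) u0c = a * cprodC u0c u0c.
  have := @cprodC_LLbu0 l m 0 0 a 1 lL mLb (sub0mx _ _) (sub0mx _ _).
  by rewrite !add0r scale1r !cprodCE !bform0r -!cprodCE !add0r mulr1.
rewrite cprodC_u0c mulfK ?cprodC_map ?fmorph_eq0 //.
rewrite !LLbu0_F ?scalemx_sub // !scalerA mulrNN ii !scaleN1r scale0r addr0.
by rewrite !opprD addrNK.
Qed.

Lemma cprod_F_F (u v : 'rV[R]_N) : cprod u0 u0 != 0 ->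
  cprod (u *m Fm) (v *m Fm) = cprod u v - cprod u u0 * cprod v u0 / cprod u0 u0.
Proof.
move=> c0; rewrite cprod_F_skew (F_sqr _ c0) !cprodE bformDr bformNr bformZr -!cprodE.
by rewrite opprD opprK; congr (_ - _); rewrite mulrC mulrA.
Qed.

Lemma rank_even_orth_u0 (S : 'M[R]_N) : (S *m Fm <= S)%MS -> cprod u0 u0 != 0 ->
  (forall v, (v <= S)%MS -> cprod v u0 = 0) -> ~~ odd (\rank S).
Proof.
move=> SF c0 S_orth; apply: rank_even_of_complex_structure SF _ => v vS.
by rewrite F_sqr // S_orth // mul0r scale0r addr0.
Qed.

End Complexification.

Section MetricSign.
Variables (R : rcfType) (n : nat) (Em Gend Fm : 'M[R]_(odd_dim n)) (u0 : 'rV[R]_(odd_dim n)).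
Hypothesis hG : generalized_metric Em Gend.
Hypothesis hF : Bn_gen_almost_complex Fm.
Hypothesis GF : Gend *m Fm = Fm *m Gend.
Hypothesis u0F : u0 *m Fm = 0.
Hypothesis c0 : cprod u0 u0 != 0.

Let u0_neq0 : u0 != 0 := nonisotropic_neq0 c0.

Lemma Gend_Fm_comm (u : 'rV[R]_(odd_dim n)) : u *m Gend *m Fm = u *m Fm *m Gend.
Proof. by rewrite -!mulmxA GF. Qed.

Lemma Em_Fstable : (Em *m Fm <= Em)%MS.
Proof.
apply/row_subP => i; rewrite row_mul; apply: (Em_of_Gend_opp hG).
by rewrite -Gend_Fm_comm (Gend_Em hG) ?row_sub // mulNmx.
Qed.

Lemma Eplus_Fstable : (Eplus Em *m Fm <= Eplus Em)%MS.
Proof.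
apply/row_subP => i; rewrite row_mul; apply: (Eplus_of_Gend_fix hG).
by rewrite -Gend_Fm_comm (Gend_Eplus hG) ?row_sub.
Qed.

Lemma Gend_u0_scalar : exists2 k : R, k ^+ 2 = 1 & u0 *m Gend = k *: u0.
Proof.
set k := cprod (u0 *m Gend) u0 / cprod u0 u0.
have Gu0 : u0 *m Gend = k *: u0.
  have := F_sqr hF u0F u0_neq0 (u0 *m Gend) c0.
  rewrite !Gend_Fm_comm u0F !mul0mx.
  by move/eqP; rewrite eq_sym addrC subr_eq0 => /eqP.
exists k => //; apply/eqP.
have := Gend_invol hG u0; rewrite Gu0 -scalemxAl Gu0 scalerA => /eqP.
rewrite -subr_eq0 -{2}(scale1r u0) -scalerBl scaler_eq0 (negbTE u0_neq0) orbF.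
by rewrite subr_eq0 expr2.
Qed.

Lemma Gend_u0 : u0 *m Gend = (-1) ^+ n *: u0.
Proof.
have [k /eqP] := Gend_u0_scalar; rewrite sqrf_eq1 => /orP[]/eqP-> Gu0.
- have u0Ep : (u0 <= Eplus Em)%MS.
    by apply: (Eplus_of_Gend_fix hG); rewrite Gu0 scale1r.
  have even_n : ~~ odd n.
    have [rankEm _ _ _ _] := hG; rewrite -rankEm.
    apply: (rank_even_orth_u0 hF u0F u0_neq0 Em_Fstable c0) => v vEm.
    by rewrite cprod_sym; apply: (in_Eplus_submx u0Ep).
  by rewrite Gu0 -signr_odd (negbTE even_n).
- have u0Em : (u0 <= Em)%MS.
    by apply: (Em_of_Gend_opp hG); rewrite Gu0 scaleN1r.
  have odd_n : odd n.
    rewrite -[odd n]negbK -[~~ odd n]/(odd n.+1) -(rank_Eplus hG).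
    apply: (rank_even_orth_u0 hF u0F u0_neq0 Eplus_Fstable c0) => v vEp.
    exact: (in_Eplus_submx vEp).
  by rewrite Gu0 -signr_odd odd_n.
Qed.

End MetricSign.

Unset Implicit Arguments.
Set Strict Implicit.

Theorem lemma3p2 (R : rcfType) (n : nat) (Em Gend Fm : 'M[R]_(odd_dim n))
  (u0 : 'rV[R]_(odd_dim n)) :
  Bn_gen_almost_pseudo_hermitian Em Gend Fm ->
  u0 *m Fm = 0 ->
  cprod u0 u0 = (-1) ^+ n ->
  (u0 *m Gend = (-1) ^+ n *: u0 /\
   ((odd n -> (u0 <= Em)%MS) /\ (~~ odd n -> in_Eplus Em u0))) /\
  (forall u v : 'rV[R]_(odd_dim n),
     Gform Gend (u *m Fm) (v *m Fm) = Gform Gend u v - cprod u u0 * cprod v u0 /\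
     Gform Gend (u *m Fm) v = - Gform Gend u (v *m Fm)).
Proof.
move=> [hG hF GF] u0F c_sign.
have c0 : cprod u0 u0 != 0 by rewrite c_sign signr_eq0.
have u0_neq0 := nonisotropic_neq0 c0.
have Gu0 := Gend_u0 hG hF GF u0F c0.
split.
  split=> //; rewrite -signr_odd in Gu0; split=> [odd_n | even_n].
  - by apply: (Em_of_Gend_opp hG); rewrite odd_n scaleN1r in Gu0.
  - apply/in_Eplus_submx/(Eplus_of_Gend_fix hG).
    by rewrite (negbTE even_n) scale1r in Gu0.
move=> u v; rewrite /Gform -(Gend_Fm_comm GF).
split; last exact: (cprod_F_skew hF u0F u0_neq0).
rewrite (cprod_F_F hF u0F u0_neq0 _ _ c0) (Gend_sym hG u u0) Gu0 -c_sign.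
by rewrite !cprodE bformZr -!cprodE; field.
Qed.
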